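(* There is an absolute constant $c$ such that for every BST $T$ and every set $F$ of $k$ nodes of $T$ containing the root of $T$, the extended hand $E(T,F)$ consists of at most $c\,k$ intervals.
   Context: Let $T$ be a BST and $F$ a set of $k$ nodes (fingers) including the root. $S(T,F)$ is the Steiner tree of $F$ in $T$ (the minimal connected subtree containing $F$). The set of pseudofingers $P(T,F)$ consists of $F$ together with all nodes of degree $3$ in $S(T,F)$. For pseudofingers $x,y$ with $x$ an ancestor of $y$ such that the path between them contains no other pseudofinger, the tendon $\tau_{x,y}$ is the set of nodes strictly between $x$ and $y$ on this path. Its half tendons are $\tau^{<}_{x,y}=\{z\in\tau_{x,y}: z<y\}$ and $\tau^{>}_{x,y}=\{z\in\tau_{x,y}:z>y\}$; $H(T,F)$ is the set of all (nonempty) half tendons. A half tendon $\tau$ is identified with the interval $[\min\tau,\max\tau]$ and a pseudofinger $f$ with $[f,f]$. The extended hand is $E(T,F)=P(T,F)\cup H(T,F)$, viewed as a set of intervals. *)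

(* Binary search trees with natural-number keys; a node is
   identified with its key. *)
From mathcomp Require Import all_boot.
Set Implicit Arguments. Unset Strict Implicit. Unset Printing Implicit Defensive.

Inductive tree := Leaf | Node of tree & nat & tree.

Fixpoint keys (t : tree) : seq nat :=
  if t is Node l k r then keys l ++ k :: keys r else [::].

Definition bst (t : tree) : bool := sorted ltn (keys t).

Definition root_seq (t : tree) : seq nat :=
  if t is Node _ k _ then [:: k] else [::].

(* the subtree of t rooted at the node with key x (Leaf if x is not a node) *)
Fixpoint subtree_at (t : tree) (x : nat) : tree :=
  if t is Node l k r then
    if k == x then t else
    if x \in keys l then subtree_at l x else subtree_at r x
  else Leaf.

(* anc t x y : x is an ancestor of y, or x = y *)
Definition anc (t : tree) (x y : nat) : bool :=
  (x \in keys t) && (y \in keys (subtree_at t x)).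

Definition children (t : tree) (z : nat) : seq nat :=
  if subtree_at t z is Node l _ r then root_seq l ++ root_seq r else [::].

(* z lies on the (unique) tree path between u and v *)
Definition on_path (t : tree) (u v z : nat) : bool :=
  (z \in keys t) &&
  ((anc t z u (+) anc t z v) ||
   [&& anc t z u, anc t z v & ~~ has (fun c => anc t c u && anc t c v) (children t z)]).

Definition steiner (t : tree) (F : seq nat) : seq nat :=
  [seq z <- keys t | has (fun u => has (fun v => on_path t u v z) F) F].

Definition deg_in (t : tree) (S : seq nat) (z : nat) : nat :=
  count (fun c => c \in S) (children t z) +
  has (fun p => (p \in S) && (z \in children t p)) (keys t).

Definition pseudofingers (t : tree) (F : seq nat) : seq nat :=
  [seq z <- keys t | (z \in F) ||
     ((z \in steiner t F) && (deg_in t (steiner t F) z == 3))].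

Definition tendon (t : tree) (x y : nat) : seq nat :=
  [seq z <- keys t | [&& anc t x z, anc t z y, z != x & z != y]].

Definition tendon_pair (t : tree) (F : seq nat) (x y : nat) : bool :=
  [&& x \in pseudofingers t F, y \in pseudofingers t F, x != y, anc t x y &
      all (fun z => z \notin pseudofingers t F) (tendon t x y)].

Definition half_lo (t : tree) (x y : nat) : seq nat := [seq z <- tendon t x y | z < y].
Definition half_hi (t : tree) (x y : nat) : seq nat := [seq z <- tendon t x y | y < z].

(* the interval [min s, max s] of a (nonempty) set of keys *)
Definition interval_of (s : seq nat) : nat * nat :=
  (\big[minn/head 0 s]_(z <- s) z, \max_(z <- s) z).

Definition half_tendon_intervals (t : tree) (F : seq nat) : seq (nat * nat) :=
  flatten [seq flatten [seq [seq interval_of s | s <- [:: half_lo t x y; half_hi t x y]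
                                               & s != [::]]
                       | y <- pseudofingers t F & tendon_pair t F x y]
          | x <- pseudofingers t F].

Definition extended_hand (t : tree) (F : seq nat) : seq (nat * nat) :=
  undup ([seq (f, f) | f <- pseudofingers t F] ++ half_tendon_intervals t F).

From mathcomp Require Import all_boot zify.

Set Implicit Arguments.
Unset Strict Implicit.
Unset Printing Implicit Defensive.

(* Every pseudofinger is a finger or a degree-3 node of the Steiner tree, and a
   degree-3 node has fingers below both of its children.  Counting nodes with
   fingers in both subtrees by induction on the tree shows there are fewer of
   them than fingers, so |P| <= 2k.  A half tendon is determined by the lower
   end y of its tendon together with a side, and y has a unique pseudofinger
   ancestor x with no pseudofinger in between, so |H| <= 2|P|.  Altogether
   |E| <= |P| + |H| <= 3|P| <= 6k. *)

Lemma bstE t : bst t = pairwise ltn (keys t).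
Proof. exact: sorted_pairwise ltn_trans _. Qed.

Lemma bst_uniq t : bst t -> uniq (keys t).
Proof. by rewrite bstE; apply: pairwise_uniq; exact: ltnn. Qed.

Lemma bst_node l k r : bst (Node l k r) ->
  [/\ bst l, bst r, {in keys l, forall x, x < k} & {in keys r, forall x, k < x}].
Proof.
rewrite !bstE /= pairwise_cat pairwise_cons allrel_consr.
case/and3P=> /andP[/allP ltl _] -> /andP[/allP ltr ->].
by split=> // x /[dup] /ltl + /ltr.
Qed.

Lemma keys_subtree_at t z : {subset keys (subtree_at t z) <= keys t}.
Proof.
elim: t => [|l IHl k r IHr] //= x; case: eqP => // _.
by rewrite mem_cat inE; case: ifP => _ /[dup] ? => [/IHl|/IHr] ->; rewrite ?orbT.
Qed.

Lemma bst_subtree_at t z : bst t -> bst (subtree_at t z).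
Proof.
elim: t => [|l IHl k r IHr] //= /[dup] bt /bst_node[bl br _ _].
by case: eqP => // _; case: ifP => _; auto.
Qed.

Lemma subtree_atL l k r x : bst (Node l k r) -> x \in keys l ->
  subtree_at (Node l k r) x = subtree_at l x.
Proof.
case/bst_node=> _ _ ltl _ xl /=.
by case: eqP => [kx|_]; [have := ltl x xl; rewrite kx ltnn | rewrite xl].
Qed.

Lemma subtree_atR l k r x : bst (Node l k r) -> x \in keys r ->
  subtree_at (Node l k r) x = subtree_at r x.
Proof.
case/bst_node=> _ _ ltl ltr xr /=; have := ltr x xr.
case: eqP => [->|_]; first by rewrite ltnn.
by case: ifP => // /ltl; lia.
Qed.

Lemma subtree_at_mem t z : z \in keys t -> exists l r, subtree_at t z = Node l z r.
Proof.
elim: t => [|l IHl k r IHr] //=; case: eqP => [->|kz]; first by eauto.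
rewrite mem_cat inE; case: ifP => [zl _|_ /= zr]; first exact: IHl.
by apply: IHr; case/orP: zr => // /eqP zk; rewrite zk in kz.
Qed.

Lemma subtree_at_subtree_at t z x : bst t -> x \in keys (subtree_at t z) ->
  subtree_at (subtree_at t z) x = subtree_at t x.
Proof.
elim: t => [|l IHl k r IHr] // /[dup] bt /bst_node[bl br _ _].
rewrite [subtree_at _ z]/=; case: eqP => // _; case: ifP => _ xz.
  by rewrite (subtree_atL bt) ?IHl // (keys_subtree_at xz).
by rewrite (subtree_atR bt) ?IHr // (keys_subtree_at xz).
Qed.

Lemma subtree_at_comparable t x x' y : bst t -> x \in keys t -> x' \in keys t ->
  y \in keys (subtree_at t x) -> y \in keys (subtree_at t x') ->
  (x' \in keys (subtree_at t x)) || (x \in keys (subtree_at t x')).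
Proof.
elim: t => [|l IHl k r IHr] //= /[dup] bt /bst_node[bl br ltl ltr].
case: (k =P x) => [<- _ -> //|/eqP/negbTE kx].
case: (k =P x') => [<- -> _ _ _|/eqP/negbTE kx']; first by rewrite orbT.
rewrite !mem_cat !inE (eq_sym x) (eq_sym x') kx kx' /=.
case: ifP => xl; case: ifP => x'l //= xr x'r.
- exact: IHl.
- by move=> /keys_subtree_at/ltl yk /keys_subtree_at/ltr /(ltn_trans yk); rewrite ltnn.
- by move=> /keys_subtree_at/ltr ky /keys_subtree_at/ltl /ltn_trans/(_ ky); rewrite ltnn.
- exact: IHr.
Qed.

Lemma subtree_at_childL t z l r x : bst t -> subtree_at t z = Node l z r ->
  x \in keys l -> subtree_at t x = subtree_at l x.
Proof.
move=> bt tz xl; have bz : bst (Node l z r) by rewrite -tz bst_subtree_at.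
have xz : x \in keys (subtree_at t z) by rewrite tz /= mem_cat xl.
by rewrite -(subtree_at_subtree_at bt xz) tz (subtree_atL bz).
Qed.

Lemma subtree_at_childR t z l r x : bst t -> subtree_at t z = Node l z r ->
  x \in keys r -> subtree_at t x = subtree_at r x.
Proof.
move=> bt tz xr; have bz : bst (Node l z r) by rewrite -tz bst_subtree_at.
have xz : x \in keys (subtree_at t z) by rewrite tz /= mem_cat inE xr !orbT.
by rewrite -(subtree_at_subtree_at bt xz) tz (subtree_atR bz).
Qed.

Fixpoint branching (F : seq nat) (t : tree) : seq nat :=
  if t is Node l k r then
    branching F l ++ branching F r ++
    (if has (fun f => f \in keys l) F && has (fun f => f \in keys r) F
     then [:: k] else [::])
  else [::].

Lemma mem_branching F t z l r : z \in keys t -> subtree_at t z = Node l z r ->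
  has (fun f => f \in keys l) F -> has (fun f => f \in keys r) F ->
  z \in branching F t.
Proof.
elim: t => [|l0 IHl k r0 IHr] //=.
case: eqP => [-> _ [-> <-] Fl Fr|kz]; first by rewrite Fl Fr !mem_cat mem_head !orbT.
rewrite mem_cat in_cons; case: ifP => [zl _ tz Fl Fr|_ /= zr tz Fl Fr].
  by rewrite mem_cat (IHl zl tz Fl Fr).
case/orP: zr => [/eqP zk|zr]; first by rewrite zk in kz.
by rewrite !mem_cat (IHr zr tz Fl Fr) orbT.
Qed.

Lemma count_keys_node F l k r : bst (Node l k r) ->
  count (fun f => f \in keys l) F + count (fun f => f \in keys r) F
  <= count (fun f => f \in keys (Node l k r)) F.
Proof.
case/bst_node=> _ _ ltl ltr; rewrite -count_predUI.
have -> : count (predI (fun f => f \in keys l) (fun f => f \in keys r)) F = 0.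
  apply/eqP; rewrite -leqn0 leqNgt -has_count; apply/hasPn => f _ /=.
  by apply/andP=> -[/ltl fk /ltr /(ltn_trans fk)]; rewrite ltnn.
by rewrite addn0; apply: sub_count => f /=; rewrite mem_cat inE => /orP[] ->; rewrite ?orbT.
Qed.

(* The extra [1] for a subtree containing a finger is what makes the induction
   go through: m > 0 fingers yield at most m - 1 branching nodes. *)
Lemma size_branching F t : bst t ->
  size (branching F t) + (0 < count (fun f => f \in keys t) F)
  <= count (fun f => f \in keys t) F.
Proof.
elim: t => [|l IHl k r IHr]; first by rewrite /= count_pred0.
move=> /[dup] /(count_keys_node F) le_c /bst_node[/IHl {}IHl /IHr {}IHr _ _].
rewrite /= !size_cat !has_count; move: le_c IHl IHr.
set cl := count _ F; set cr := count _ F; set c := count _ F.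
case: (posnP cl) => [->|pl]; case: (posnP cr) => [->|pr]; rewrite /= ?pl ?pr /=; lia.
Qed.

Lemma steiner_finger_below t F c : c \in steiner t F ->
  has (fun f => f \in keys (subtree_at t c)) F.
Proof.
rewrite mem_filter => /andP[/hasP[u uF /hasP[v vF]]] + _.
rewrite /on_path /anc => /andP[_ onp]; apply/hasP.
have : (u \in keys (subtree_at t c)) || (v \in keys (subtree_at t c)).
  by move: onp; case: (u \in _); case: (v \in _); rewrite ?andbF.
by case/orP; [exists u | exists v].
Qed.

Lemma size_children t z : size (children t z) <= 2.
Proof. by rewrite /children; case: subtree_at => // -[|? ? ?] _ [|? ? ?]. Qed.

Lemma deg_in3_children t S z : deg_in t S z = 3 ->
  size (children t z) = 2 /\ {subset children t z <= S}.
Proof.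
rewrite /deg_in; set n := count _ _; set p := has _ _ => deg3.
have le_n : n <= size (children t z) := count_size _ _.
have le_p := leq_b1 p; have le_size := size_children t z; clearbody p.
have n_size : n = size (children t z) by lia.
by split; [lia | apply/allP; rewrite all_count -n_size].
Qed.

Lemma deg3_branching t F z : bst t -> z \in keys t ->
  deg_in t (steiner t F) z = 3 -> z \in branching F t.
Proof.
move=> bt zt; have [l [r tz]] := subtree_at_mem zt.
case/deg_in3_children; rewrite /children tz.
case: l tz => [|l' a r'] tz; case: r tz => [|l'' b r''] tz //= _ sub.
apply: (mem_branching zt tz).
- have := steiner_finger_below (sub a (mem_head _ _)).
  by rewrite (subtree_at_childL bt tz) /= ?eqxx // mem_cat mem_head orbT.
- have := steiner_finger_below (sub b (mem_last a [:: b])).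
  by rewrite (subtree_at_childR bt tz) /= ?eqxx // mem_cat mem_head orbT.
Qed.

Lemma size_pseudofingers t F : bst t -> size (pseudofingers t F) <= 2 * size F.
Proof.
move=> bt; rewrite /pseudofingers size_filter.
set fin := fun z => z \in F.
set deg3 := fun z => (z \in steiner t F) && (deg_in t (steiner t F) z == 3).
apply: (@leq_trans (count fin (keys t) + count deg3 (keys t))).
  by rewrite -count_predUI leq_addr.
have -> : 2 * size F = size F + size F by rewrite mul2n addnn.
apply: leq_add; rewrite -size_filter.
  apply: uniq_leq_size; first by rewrite filter_uniq ?bst_uniq.
  by move=> z; rewrite mem_filter => /andP[].
apply: (@leq_trans (size (branching F t))).
  apply: uniq_leq_size; first by rewrite filter_uniq ?bst_uniq.
  by move=> z; rewrite mem_filter => /andP[/andP[_ /eqP]] /[swap] /(deg3_branching bt); apply.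
exact: leq_trans (leq_addr _ _) (leq_trans (size_branching F bt) (count_size _ _)).
Qed.

Lemma pseudofingers_uniq t F : bst t -> uniq (pseudofingers t F).
Proof. by move=> bt; rewrite filter_uniq ?bst_uniq. Qed.

Lemma tendon_pair_uniq t F x x' y : bst t ->
  tendon_pair t F x y -> tendon_pair t F x' y -> x = x'.
Proof.
move=> bt /and5P[xP _ xy /andP[xt yx] noPx] /and5P[x'P _ x'y /andP[x't yx'] noPx'].
apply/eqP; apply: contraT => neq.
case/orP: (subtree_at_comparable bt xt x't yx yx') => [x'x|xx'].
- have : x' \in tendon t x y by rewrite mem_filter /anc xt x'x x't yx' x'y eq_sym neq.
  by move/(allP noPx); rewrite x'P.
- have : x \in tendon t x' y by rewrite mem_filter /anc x't xx' xt yx xy neq.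
  by move/(allP noPx'); rewrite xP.
Qed.

Lemma size_flatten_map (A B : Type) (f : A -> seq B) s :
  size (flatten (map f s)) = \sum_(x <- s) size (f x).
Proof. by rewrite size_flatten sumnE /shape -map_comp big_map. Qed.

Lemma count_le1_uniq (T : eqType) (a : pred T) s : uniq s ->
  {in s &, forall x y, a x -> a y -> x = y} -> count a s <= 1.
Proof.
move=> us a_inj; case: (boolP (has a s)) => [/hasP[x xs ax]|]; last first.
  by rewrite has_count; case: count.
rewrite (@eq_in_count _ _ (pred1 x)) ?count_uniq_mem ?leq_b1 // => y ys /=.
by apply/idP/eqP => [ay|->//]; exact: a_inj.
Qed.

Lemma size_half_tendon_intervals t F : bst t ->
  size (half_tendon_intervals t F) <= 2 * size (pseudofingers t F).
Proof.
move=> bt; set P := pseudofingers t F.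
rewrite /half_tendon_intervals -/P size_flatten_map.
apply: (@leq_trans (\sum_(x <- P) \sum_(y <- P | tendon_pair t F x y) 2)).
  apply: leq_sum => x _; rewrite size_flatten_map big_filter.
  by apply: leq_sum => y _; rewrite size_map size_filter (count_size _ [:: _; _]).
rewrite (exchange_big_dep xpredT) //= -sum1_size big_distrr leq_sum // => y _.
rewrite big_const_seq iter_addn_0 leq_mul2l /=.
apply: count_le1_uniq; first exact: pseudofingers_uniq.
by move=> x x' _ _; exact: tendon_pair_uniq.
Qed.

Theorem lemma14 :
  exists c : nat, forall (t : tree) (F : seq nat),
    bst t -> uniq F -> {subset F <= keys t} ->
    (forall r, r \in root_seq t -> r \in F) ->
    size (extended_hand t F) <= c * size F.
Proof.
(* The bound holds for any list F of keys. *)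
exists 6 => t F bt _ _ _.
rewrite /extended_hand (leq_trans (size_undup _)) // size_cat size_map.
have le_H := size_half_tendon_intervals F bt; have le_P := size_pseudofingers F bt.
rewrite (leq_trans (leq_add (leqnn _) le_H)) // -mulSn.
by rewrite (leq_trans (leq_mul (leqnn 3) le_P)) // mulnA.
Qed.
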